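(* Let $\mathbf{S}$ be any one of the four systems $\mathbf{G3N}$, $\mathbf{G3NeF}$, $\mathbf{G3CoPC}$, $\mathbf{G3MPC}$. Let $\Gamma$ be a finite multiset of formulas none of which contains the connective $\vee$, and let $\varphi,\psi$ be formulas. If $\Gamma\Rightarrow\varphi\vee\psi$ has a derivation in $\mathbf{S}$ of height $n$, then $\Gamma\Rightarrow\varphi$ or $\Gamma\Rightarrow\psi$ has a derivation in $\mathbf{S}$ of height at most $n$.
   Context: Formulas are generated from a countable set of propositional variables $p,q,\dots$ and the constant $\top$ by the grammar $\varphi::= p\mid\top\mid\varphi\wedge\varphi\mid\varphi\vee\varphi\mid\varphi\to\varphi\mid\neg\varphi$ (there is no constant $\bot$). $\varphi\leftrightarrow\psi$ abbreviates $(\varphi\to\psi)\wedge(\psi\to\varphi)$. A sequent is an expression $\Gamma\Rightarrow\varphi$ where $\Gamma$ is a finite multiset of formulas and $\varphi$ is a formula (the goal); $\Gamma,\Delta$ denotes multiset union and $\Gamma,\alpha$ denotes $\Gamma$ with one more occurrence of $\alpha$. Rules ($p$ a propositional variable): (ax) $\Gamma,p\Rightarrow p$ (no premises); ($\top$) $\Gamma\Rightarrow\top$ (no premises); ($\to$r) from $\Gamma,\alpha\Rightarrow\beta$ infer $\Gamma\Rightarrow\alpha\to\beta$; ($\to$l) from $\Gamma,\alpha\to\beta\Rightarrow\alpha$ and $\Gamma,\beta\Rightarrow\varphi$ infer $\Gamma,\alpha\to\beta\Rightarrow\varphi$; ($\wedge$r) from $\Gamma\Rightarrow\alpha$ and $\Gamma\Rightarrow\beta$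 infer $\Gamma\Rightarrow\alpha\wedge\beta$; ($\wedge$l) from $\Gamma,\alpha,\beta\Rightarrow\varphi$ infer $\Gamma,\alpha\wedge\beta\Rightarrow\varphi$; ($\vee$r$_1$), ($\vee$r$_2$) from $\Gamma\Rightarrow\alpha$ (resp. $\Gamma\Rightarrow\beta$) infer $\Gamma\Rightarrow\alpha\vee\beta$; ($\vee$l) from $\Gamma,\alpha\Rightarrow\varphi$ and $\Gamma,\beta\Rightarrow\varphi$ infer $\Gamma,\alpha\vee\beta\Rightarrow\varphi$; (n) from $\Gamma,\neg\alpha,\beta\Rightarrow\alpha$ and $\Gamma,\neg\alpha,\alpha\Rightarrow\beta$ infer $\Gamma,\neg\alpha\Rightarrow\neg\beta$; (nef) from $\Gamma,\neg\alpha\Rightarrow\alpha$ infer $\Gamma,\neg\alpha\Rightarrow\neg\beta$; (copc) from $\Gamma,\neg\alpha,\beta\Rightarrow\alpha$ infer $\Gamma,\neg\alpha\Rightarrow\neg\beta$; (an) from $\Gamma,\alpha\Rightarrow\neg\alpha$ infer $\Gamma\Rightarrow\neg\alpha$. The rules (ax) through ($\vee$l) are the positive rules. The four systems are: $\mathbf{G3N}$ = positive rules + (n); $\mathbf{G3NeF}$ = positive rules + (n) + (nef); $\mathbf{G3CoPC}$ = positive rules + (copc); $\mathbf{G3MPC}$ = positive rules + (copc) + (an). None of them contains weakening, contraction or cut as a rule. A derivation is a finite tree of rule instances with leaves instances of (ax) or ($\top$); its height is the number of inference steps on a longest branch. A sequent is derivable if it has a derivation; a formula $\varphi$ is a theorem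 if $\Rightarrow\varphi$ (empty antecedent) is derivable. *)

From Stdlib Require Import List Permutation Arith.
Import ListNotations.

Inductive form : Type :=
| Var : nat -> form
| Top : form
| And : form -> form -> form
| Or  : form -> form -> form
| Imp : form -> form -> form
| Neg : form -> form.

Fixpoint or_free (f : form) : Prop :=
  match f with
  | Var _ | Top => True
  | And a b | Imp a b => or_free a /\ or_free b
  | Or _ _ => False
  | Neg a => or_free a
  end.

Inductive system : Type := G3N | G3NeF | G3CoPC | G3MPC.

Definition has_n (s : system) : bool :=
  match s with G3N | G3NeF => true | _ => false end.
Definition has_nef (s : system) : bool :=
  match s with G3NeF => true | _ => false end.
Definition has_copc (s : system) : bool :=
  match s with G3CoPC | G3MPC => true | _ => false end.
Definition has_an (s : system) : bool :=
  match s with G3MPC => true | _ => false end.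

(* Antecedents are multisets, represented as lists modulo Permutation:
   every rule conclusion allows an arbitrary permutation of its antecedent.
   [der s h G f] : the sequent G => f has a derivation in s of height
   exactly h (height = number of inference steps on a longest branch). *)
Inductive der (s : system) : nat -> list form -> form -> Prop :=
| d_ax : forall G D p, Permutation D (Var p :: G) -> der s 0 D (Var p)
| d_top : forall G, der s 0 G Top
| d_impr : forall G a b n, der s n (a :: G) b -> der s (S n) G (Imp a b)
| d_impl : forall G D a b f n m, Permutation D (Imp a b :: G) ->
    der s n D a -> der s m (b :: G) f -> der s (S (Nat.max n m)) D f
| d_andr : forall G a b n m, der s n G a -> der s m G b ->
    der s (S (Nat.max n m)) G (And a b)
| d_andl : forall G D a b f n, Permutation D (And a b :: G) ->
    der s n (a :: b :: G) f -> der s (S n) D f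
| d_orr1 : forall G a b n, der s n G a -> der s (S n) G (Or a b)
| d_orr2 : forall G a b n, der s n G b -> der s (S n) G (Or a b)
| d_orl : forall G D a b f n m, Permutation D (Or a b :: G) ->
    der s n (a :: G) f -> der s m (b :: G) f -> der s (S (Nat.max n m)) D f
| d_n : forall G D a b n m, has_n s = true -> Permutation D (Neg a :: G) ->
    der s n (b :: D) a -> der s m (a :: D) b -> der s (S (Nat.max n m)) D (Neg b)
| d_nef : forall G D a b n, has_nef s = true -> Permutation D (Neg a :: G) ->
    der s n D a -> der s (S n) D (Neg b)
| d_copc : forall G D a b n, has_copc s = true -> Permutation D (Neg a :: G) ->
    der s n (b :: D) a -> der s (S n) D (Neg b)
| d_an : forall G a n, has_an s = true ->
    der s n (a :: G) (Neg a) -> der s (S n) G (Neg a).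

From Stdlib Require Import List Permutation Lia.
Import ListNotations.

(* We argue by induction on a derivation of [G => f], generalising over the
   goal [f]; only derivations whose goal is a disjunction [phi \/ psi] matter.
   - The last rule cannot be an axiom, (T), (->r), (/\r), a negation rule
     or (an): none of these has a disjunction as goal.
   - It cannot be (\/l), since the antecedent contains no disjunction.
   - If it is (\/r1) or (\/r2), its premise is the derivation we want.
   - If it is (->l) or (/\l), the disjunction is the goal of the (last)
     premise, whose antecedent is still or-free; the induction hypothesis
     gives a derivation of one disjunct, and the same rule is re-applied,
     which does not increase the height. *)

Definition or_free_ctx (G : list form) : Prop := forall f, In f G -> or_free f.

Lemma perm_in_head (D G : list form) (x : form) :
  Permutation D (x :: G) -> In x D.
Proof.
  intros HP. apply (Permutation_in _ (Permutation_sym HP)). now left.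
Qed.

Lemma or_free_ctx_head (D G : list form) (x : form) :
  Permutation D (x :: G) -> or_free_ctx D -> or_free x.
Proof.
  intros HP HD. apply HD, (perm_in_head _ _ _ HP).
Qed.

Lemma or_free_ctx_replace (D G G' : list form) (x : form) :
  Permutation D (x :: G) -> or_free_ctx D ->
  (forall f, In f G' -> or_free f) -> or_free_ctx (G' ++ G).
Proof.
  intros HP HD HG' f Hf. apply in_app_or in Hf as [Hf | Hf]; [now apply HG'|].
  apply HD, (Permutation_in _ (Permutation_sym HP)). now right.
Qed.

Lemma or_free_disjunction_property (s : system) (n : nat) (D : list form) (f : form) :
  der s n D f -> forall phi psi, f = Or phi psi -> or_free_ctx D ->
  exists m, m <= n /\ (der s m D phi \/ der s m D psi).
Proof.
  induction 1 as
    [| | | G D a b f n m HP Hleft _ _ IHright | | G D a b f n HP _ IH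
     | G a b n Hd _ | G a b n Hd _ | G D a b f n m HP _ _ _ _ | | | |];
    intros phi psi Hf HD; try discriminate.
  -
    destruct (or_free_ctx_head _ _ _ HP HD) as [_ Hb].
    assert (Hctx : or_free_ctx (b :: G)).
    { apply (or_free_ctx_replace D G [b] (Imp a b) HP HD).
      now intros y [<- | []]. }
    destruct (IHright phi psi Hf Hctx) as [k [Hk Hdisj]].
    exists (S (Nat.max n k)). split; [lia|].
    destruct Hdisj; [left | right]; eapply d_impl; eassumption.
  -
    destruct (or_free_ctx_head _ _ _ HP HD) as [Ha Hb].
    assert (Hctx : or_free_ctx (a :: b :: G)).
    { apply (or_free_ctx_replace D G [a; b] (And a b) HP HD).
      now intros y [<- | [<- | []]]. }
    destruct (IH phi psi Hf Hctx) as [k [Hk Hdisj]].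
    exists (S k). split; [lia|].
    destruct Hdisj; [left | right]; eapply d_andl; eassumption.
  -
    injection Hf as -> ->. exists n. split; [lia | now left].
  -
    injection Hf as -> ->. exists n. split; [lia | now right].
  - (* (\/l) is impossible: its principal formula is a disjunction. *)
    destruct (or_free_ctx_head _ _ _ HP HD).
Qed.

Theorem mainTheorem5 (s : system) (G : list form) (phi psi : form) (n : nat) :
  (forall f, In f G -> or_free f) ->
  der s n G (Or phi psi) ->
  exists m, m <= n /\ (der s m G phi \/ der s m G psi).
Proof.
  intros HG Hder.
  exact (or_free_disjunction_property s n G (Or phi psi) Hder phi psi eq_refl HG).
Qed.
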